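(* Let $r$ be a rational number with $0<r<1$ and $r\neq 1/p$ for every integer $p\ge2$, written as $r=[m_1,\dots,m_k]$ with $k\ge2$, $m_i\in\mathbb{Z}_{>0}$, $m_k\ge2$, and let $n\ge2$ be an integer. Let $(S_1,S_2,S_1,S_2)$ be the decomposition of $CS(r)$ described in the context. Then for every rational number $s\in I_1(r;n)\cup I_2(r;n)$: (1) if $k$ is even, $CS(s)$ does not contain $((2n-2)\langle S_1,S_2\rangle,S_1)$ as a subsequence; (2) if $k$ is odd, $CS(s)$ does not contain $((2n-2)\langle S_2,S_1\rangle,S_2)$ as a subsequence.
   Context: Continued fractions: $[m_1,\dots,m_k]=1/(m_1+1/(m_2+\cdots+1/m_k))$. Set $m=m_1$. Intervals: if $k$ is even, $I_1(r;n)=[0,[m_1,\dots,m_{k-1},m_k-1,2]]$ and $I_2(r;n)=([m_1,\dots,m_k,2n-2],1]$; if $k$ is odd, $I_1(r;n)=[0,[m_1,\dots,m_k,2n-2])$ and $I_2(r;n)=[[m_1,\dots,m_{k-1},m_k-1,2],1]$. For $s\in\mathbb{Q}\cup\{\infty\}$, $u_s$ is the cyclically reduced, cyclically alternating word in the free group $F(a,b)$ (letters $a^{\pm1}$, $b^{\pm1}$ alternate) representing the simple loop of slope $s$ on the 4-punctured 2-bridge sphere in the upper tangle complement (well defined up to cyclic permutation and inversion). For a cyclically reduced cyclic word $(w)$ in $\{a,b\}$, decompose it cyclically into maximal subwords that are alternately positive (all exponents $+1$) and negative (all exponents $-1$); $CS(w)$ is the cyclic sequence of their lengths (if $w$ is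 entirely positive or negative, $CS(w)=((|w|))$). $CS(s):=CS(u_s)$. $CS(r)$ consists of the integers $m$ and $m+1$ and has a decomposition $CS(r)=((S_1,S_2,S_1,S_2))$ in which each $S_i$ is a symmetric sequence (equal to its reverse) occurring only twice in $CS(r)$, $S_1$ begins and ends with $m+1$, and $S_2$ begins and ends with $m$; this is the decomposition meant. For a sequence $T$ and finite sequences $A,B$, $d\langle A,B\rangle$ denotes $(A,B,A,B,\dots,A,B)$ with $d$ copies of $(A,B)$. ''Contains as a subsequence'' means occurs as a block of consecutive terms of the cyclic sequence. *)

From mathcomp Require Import all_boot all_order all_algebra.
Set Implicit Arguments. Unset Strict Implicit. Unset Printing Implicit Defensive.
Import Order.TTheory GRing.Theory Num.Theory.
Local Open Scope ring_scope.

(** Continued fractions: [m_1,...,m_k] = 1/(m_1 + 1/(m_2 + ... + 1/m_k)). *)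
Fixpoint cf (ms : seq nat) : rat :=
  match ms with
  | [::] => 0
  | x :: t => (x%:R + cf t)^-1
  end.

(* [m_1,...,m_{k-1}, m_k - 1, 2] *)
Definition cf_endA (ms : seq nat) : rat :=
  cf (take (size ms).-1 ms ++ [:: (last 0%N ms).-1; 2%N]).
Definition cf_endB (ms : seq nat) (n : nat) : rat :=
  cf (ms ++ [:: (2 * n - 2)%N]).

Definition inI1 (ms : seq nat) (n : nat) (s : rat) : bool :=
  if ~~ odd (size ms) then (0 <= s) && (s <= cf_endA ms)
  else (0 <= s) && (s < cf_endB ms n).

Definition inI2 (ms : seq nat) (n : nat) (s : rat) : bool :=
  if ~~ odd (size ms) then (cf_endB ms n < s) && (s <= 1)
  else (cf_endA ms <= s) && (s <= 1).

(** Words in F(a,b): a letter is (is_b, positive exponent). *)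
Definition letter := (bool * bool)%type.
Definition lA (e : bool) : letter := (false, e).
Definition lB (e : bool) : letter := (true, e).
Definition winv (w : seq letter) : seq letter :=
  rev [seq (x.1, ~~ x.2) | x <- w].

(** u_s for s = q/p (p > 0, gcd(p,q) = 1), following Lee--Sakuma:
    eps_i = (-1)^floor(i q / p),
    hat u_s = b^{eps_1} a^{eps_2} b^{eps_3} ... (p-1 letters),
    u_s = a hat u_s b^{(-1)^q} hat u_s^{-1}   if p is odd,
    u_s = a hat u_s a^{-1}    hat u_s^{-1}    if p is even. *)
Definition eps (s : rat) (i : nat) : bool :=
  (2 %| ((i%:Z * numq s) %/ denq s)%Z)%Z.

Definition uhat (s : rat) : seq letter :=
  [seq (odd i, eps s i) | i <- iota 1 (`|denq s|%N).-1].

Definition u_word (s : rat) : seq letter :=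
  if odd `|denq s|%N then
    lA true :: uhat s ++ lB (2 %| numq s)%Z :: winv (uhat s)
  else
    lA true :: uhat s ++ lA false :: winv (uhat s).

Fixpoint runs_aux (b : bool) (c : nat) (s : seq bool) : seq nat :=
  match s with
  | [::] => [:: c]
  | x :: t => if x == b then runs_aux b c.+1 t else c :: runs_aux x 1 t
  end.
Definition runs (s : seq bool) : seq nat :=
  if s is x :: t then runs_aux x 1 t else [::].

(** CS(w): the cyclic sequence of lengths of maximal positive/negative
    subwords of the cyclic word w, represented by a linear sequence
    (meaningful up to rotation). *)
Definition CSw (w : seq letter) : seq nat :=
  let s := [seq x.2 | x <- w] in
  let i := find id [seq x.1 != x.2 | x <- zip s (rotr 1 s)] in
  if i == size s then [:: size s] else runs (rot i s).

Definition CS (s : rat) : seq nat := CSw (u_word s).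

(** Cyclic sequences (represented by linear ones, up to rotation):
    S occurs as a block of consecutive terms of ((T)). *)
Definition cyc_contains (S T : seq nat) : bool :=
  has (fun i => prefix S (rot i T)) (iota 0 (size T)).
Definition cyc_count (S T : seq nat) : nat :=
  count (fun i => prefix S (rot i T)) (iota 0 (size T)).

(** The decomposition CS(r) = ((S1,S2,S1,S2)) of the context, with m = m_1. *)
Definition CS_decomp (r : rat) (m : nat) (S1 S2 : seq nat) : Prop :=
  [/\ exists i, rot i (CS r) = S1 ++ S2 ++ S1 ++ S2,
      S1 = rev S1 /\ S2 = rev S2,
      cyc_count S1 (CS r) = 2%N /\ cyc_count S2 (CS r) = 2%N,
      S1 != [::] /\ head 0%N S1 = m.+1 /\ last 0%N S1 = m.+1 &
      S2 != [::] /\ head 0%N S2 = m /\ last 0%N S2 = m].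

(** d<A,B> followed by C *)
Definition rep_pattern (d : nat) (A B C : seq nat) : seq nat :=
  flatten (nseq d (A ++ B)) ++ C.

From mathcomp Require Import all_boot all_order all_algebra.
From mathcomp Require Import zify ring lra.
Import Order.TTheory GRing.Theory Num.Theory.

Set Implicit Arguments.
Unset Strict Implicit.
Unset Printing Implicit Defensive.

(* For [s = q/p] in lowest terms, [CS(s)] is the cyclic sequence of the [2 q] gaps
   [c_j = ceil((j+1) p/q) - ceil(j p/q)], so every block [W] of consecutive terms
   satisfies [|q * sum W - p * size W| < q].  Write [r = Q/P] and let [t] be the inverse
   of [P] modulo [Q].  Since the gaps are [Q]-periodic and invariant under the shift by
   [t] away from multiples of [Q], the requirement that [S1] and [S2] occur only twice,
   together with [S1 = rev S1] and the first terms [m+1], [m], forces [S1] to be the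
   block of the first [t] gaps and [S2] the block of the next [Q - t] gaps; [t] and the
   sums of [S1], [S2] are read off the penultimate convergent of [r].  The block estimate
   applied to the whole pattern and to its sub-block [S2 S1 S2] (resp. [S1 S2 S1]) then
   puts [s] in the gap between [I1(r;n)] and [I2(r;n)]. *)

(** * Gaps between the ceilings of [J p / q] *)

Definition ceilq (p q J : nat) := (J * p + q.-1) %/ q.
Definition cgap (p q j : nat) := ceilq p q j.+1 - ceilq p q j.
Definition cwin (p q j l : nat) := mkseq (fun t => cgap p q (j + t)) l.

Section CeilingGaps.

Variables p q : nat.
Hypothesis q_gt0 : 0 < q.

Lemma ceilq_leP J x : (ceilq p q J <= x) = (J * p <= x * q).
Proof.
rewrite /ceilq -ltnS ltn_divLR // mulSn.
by apply/idP/idP => H; lia.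
Qed.

Lemma ceilq_ge J : J * p <= ceilq p q J * q.
Proof. by rewrite -ceilq_leP. Qed.

Lemma ceilq_le J : ceilq p q J * q <= J * p + q.-1.
Proof. exact: leq_divM. Qed.

Lemma ceilq_mono J1 J2 : J1 <= J2 -> ceilq p q J1 <= ceilq p q J2.
Proof. by move=> le12; apply: leq_div2r; rewrite leq_add2r leq_mul2r le12 orbT. Qed.

Lemma ceilq0 : ceilq p q 0 = 0.
Proof. by rewrite /ceilq mul0n add0n divn_small // prednK. Qed.

Lemma ceilqDm J k : ceilq p q (J + k * q) = ceilq p q J + k * p.
Proof.
rewrite /ceilq (_ : _ + q.-1 = k * p * q + (J * p + q.-1)); last first.
  by rewrite mulnDl mulnAC; lia.
by rewrite divnMDl // addnC.
Qed.

Lemma cgapDm j k : cgap p q (j + k * q) = cgap p q j.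
Proof.
rewrite /cgap -addSn !ceilqDm.
have := ceilq_mono (leqnSn j); lia.
Qed.

Lemma cgap_mod j : cgap p q j = cgap p q (j %% q).
Proof. by rewrite {1}(divn_eq j q) addnC cgapDm. Qed.

Lemma cgap_le0 j : cgap p q j <= cgap p q 0.
Proof.
rewrite /cgap ceilq0 leq_subLR ceilq_leP.
have := ceilq_ge j; have := ceilq_ge 1.
rewrite mulnDl mulSn; lia.
Qed.

Lemma cgap_gt0 j : q <= p -> 0 < cgap p q j.
Proof.
move=> qp; rewrite /cgap subn_gt0 ltnNge ceilq_leP.
have := ceilq_le j; rewrite mulSn; lia.
Qed.

End CeilingGaps.

Lemma runs_aux_nseq b c k t : runs_aux b c (nseq k b ++ t) = runs_aux b (c + k) t.
Proof. by elim: k c => [|k IH] c /=; rewrite ?addn0 // eqxx IH addSnnS. Qed.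

Section AlternatingBlocks.

Variable g : nat -> nat.
Hypothesis g_gt0 : forall j, 0 < g j.

Let blocks j0 K := flatten [seq nseq (g j) (~~ odd j) | j <- iota j0 K].

Lemma runs_aux_blocks K j0 c k :
  runs_aux (~~ odd j0) c (nseq k (~~ odd j0) ++ blocks j0.+1 K)
  = (c + k) :: [seq g j | j <- iota j0.+1 K].
Proof.
elim: K j0 c k => [|K IH] j0 c k; first by rewrite /= runs_aux_nseq.
rewrite /blocks /= runs_aux_nseq.
have := g_gt0 j0.+1; case: (g j0.+1) => [//|m] _ /=.
have := IH j0.+1 1 m; rewrite /= negbK => ->.
by case: (odd j0); rewrite /= add1n.
Qed.

Lemma runs_blocks K : 0 < K -> runs (blocks 0 K) = [seq g j | j <- iota 0 K].
Proof.
case: K => [//|K] _; rewrite /blocks /=.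
have := g_gt0 0; case: (g 0) => [//|m] _ /=.
by have := runs_aux_blocks K 0 1 m; rewrite /= add1n.
Qed.

End AlternatingBlocks.

Lemma map_const_nseq (T : Type) (x : bool) (s : seq T) :
  [seq x | _ <- s] = nseq (size s) x.
Proof. by elim: s => //= y s ->. Qed.

(** * [CS(q/p)] as a sequence of gaps *)

(* [i q %/ p = j] exactly when [ceilq p q j <= i < ceilq p q j.+1]. *)
Lemma floor_parity_blocks p q J : 0 < q -> 0 < p ->
  [seq ~~ odd (i * q %/ p) | i <- iota 0 (ceilq p q J)] =
  flatten [seq nseq (cgap p q j) (~~ odd j) | j <- iota 0 J].
Proof.
move=> q0 p0; elim: J => [|J IH]; first by rewrite ceilq0.
have hm := ceilq_mono p q (leqnSn J).
rewrite -(subnKC hm) iotaD map_cat IH -addn1 iotaD map_cat flatten_cat /= cats0.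
congr (_ ++ _).
rewrite /cgap add0n addn1 -[X in nseq X](size_iota (ceilq p q J)) -map_const_nseq.
apply/eq_in_map => i; rewrite mem_iota subnKC // => /andP[lo hi].
suff -> : i * q %/ p = J by [].
apply/eqP; rewrite eqn_leq; apply/andP; split.
  by rewrite -ltnS ltn_divLR // ltnNge -ceilq_leP // -ltnNge.
by rewrite leq_divRL // -ceilq_leP.
Qed.

(* This is the symmetry making the second half of the signs of [u_s] the reversed
   negation of the first half. *)
Lemma odd_div_mirror p q t : coprime q p -> 0 < q -> 0 < t < p ->
  odd ((p + t) * q %/ p) = ~~ odd ((p - t) * q %/ p).
Proof.
move=> cop q0 /andP[t0 tp]; have p0 : 0 < p by lia.
set k := t * q %/ p; set r := t * q %% p.
have e : t * q = k * p + r by rewrite /k /r -divn_eq.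
have rp : r < p by rewrite /r ltn_mod.
have r0 : 0 < r.
  rewrite lt0n; apply/negP => /eqP r0.
  have : p %| t * q by rewrite /dvdn -/r r0.
  rewrite Gauss_dvdl; last by rewrite coprime_sym.
  by move/(dvdn_leq t0); rewrite leqNgt tp.
have kq : k < q by rewrite /k ltn_divLR // mulnC ltn_mul2l q0.
have -> : (p + t) * q %/ p = q + k.
  by rewrite mulnDl e (mulnC p q) divnMDl // divnMDl // divn_small // addn0.
have -> : (p - t) * q %/ p = q - k - 1.
  have -> : (p - t) * q = (q - k - 1) * p + (p - r).
    have : k.+1 * p <= q * p by rewrite leq_mul2r kq orbT.
    rewrite mulnBl e (_ : q - k - 1 = q - k.+1); last by lia.
    rewrite mulnBl mulSn (mulnC p q); lia.
  by rewrite divnMDl // divn_small ?addn0 //; lia.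
have -> : q + k = (q - k - 1) + (2 * k + 1) by lia.
by rewrite oddD addn1 /= oddM /= addbT.
Qed.

Lemma eps_num_den (s : rat) q p i : numq s = Posz q -> denq s = Posz p ->
  eps s i = ~~ odd (i * q %/ p).
Proof. by rewrite /eps => -> ->; rewrite -PoszM divz_nat dvdzE /= dvdn2. Qed.

Lemma rev_iota1 p' :
  rev (iota 1 p') = [seq 2 * p'.+1 - i | i <- iota p'.+2 p'].
Proof.
apply: (@eq_from_nth _ 0); first by rewrite size_rev size_map !size_iota.
move=> t; rewrite size_rev size_iota => tp.
rewrite nth_rev ?size_iota // (nth_map 0) ?size_iota // !nth_iota //; lia.
Qed.

Section USigns.

Variables (s : rat) (q p' : nat).
Let p := p'.+1.
Hypotheses (num_s : numq s = Posz q) (den_s : denq s = Posz p) (q_gt0 : 0 < q).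

Let signs a b := [seq ~~ odd (i * q %/ p) | i <- iota a b].

Lemma coprime_num_den_nat : coprime q p.
Proof. by have := coprime_num_den s; rewrite num_s den_s. Qed.

Lemma uhat_signs : [seq x.2 | x <- uhat s] = signs 1 p'.
Proof.
by rewrite /uhat den_s -map_comp; apply/eq_map => i /=; rewrite (eps_num_den _ num_s den_s).
Qed.

Lemma winv_uhat_signs : [seq x.2 | x <- winv (uhat s)] = signs p'.+2 p'.
Proof.
rewrite /winv map_rev -map_comp (@eq_map _ _ _ (negb \o snd)) // map_comp uhat_signs.
rewrite /signs -map_comp -map_rev rev_iota1 -map_comp.
apply/eq_in_map => i; rewrite mem_iota => /andP[lo hi] /=.
have := odd_div_mirror (t := i - p) coprime_num_den_nat q_gt0.
have -> : p + (i - p) = i by rewrite /p; lia.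
have -> : p - (i - p) = 2 * p - i by rewrite /p; lia.
by move=> -> //; rewrite /p; lia.
Qed.

Lemma u_word_signs : [seq x.2 | x <- u_word s] = signs 0 (2 * p).
Proof.
have -> : signs 0 (2 * p) = true :: signs 1 p' ++ ~~ odd q :: signs p'.+2 p'.
  rewrite /signs (_ : 2 * p = 1 + p' + 1 + p'); last by rewrite /p; lia.
  by rewrite !iotaD /= !map_cat /= -!catA /= !add0n !addn1 !add1n mulKn.
rewrite /u_word den_s /=; case: ifP => podd /=;
  rewrite !map_cat /= uhat_signs winv_uhat_signs.
  by rewrite num_s dvdzE /= dvdn2.
have : ~~ (2 %| gcdn q p) by rewrite (eqP coprime_num_den_nat).
by rewrite dvdn_gcd !dvdn2 /= negbK (negbFE podd) andbT negbK => ->.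
Qed.

End USigns.

Lemma CSw_runs w mid : [seq x.2 | x <- w] = rcons (true :: mid) false ->
  CSw w = runs [seq x.2 | x <- w].
Proof. by move=> E; rewrite /CSw E rotr1_rcons /= cats0. Qed.

Lemma CS_num_den (s : rat) q p : numq s = Posz q -> denq s = Posz p ->
  0 < q -> q <= p -> CS s = mkseq (cgap p q) (2 * q).
Proof.
case: p => [|p'] num_s den_s q0 qp; first by have := leq_trans q0 qp.
set p := p'.+1.
have twice : ceilq p q (0 + 2 * q) = 2 * p by rewrite ceilqDm // ceilq0.
rewrite add0n in twice.
have E := u_word_signs num_s den_s q0.
rewrite /CS (@CSw_runs _ [seq ~~ odd (i * q %/ p) | i <- iota 1 (2 * p - 2)]) E.
  rewrite -twice floor_parity_blocks // runs_blocks ?muln_gt0 //.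
  by move=> j; apply: cgap_gt0.
rewrite [in LHS](_ : 2 * p = 1 + (2 * p - 2) + 1); last by rewrite /p; lia.
rewrite !iotaD !map_cat /= -cats1 !add0n.
congr (_ :: _ ++ [:: _]).
rewrite (_ : (1 + (2 * p - 2)) * q = (2 * q - 1) * p + (p - q)); last first.
  rewrite (_ : 1 + (2 * p - 2) = 2 * p - 1); last by rewrite /p; lia.
  by rewrite !mulnBl !mul1n; nia.
rewrite divnMDl // divn_small; last by rewrite /p; lia.
by rewrite addn0 (_ : 2 * q - 1 = (q - 1).*2.+1) /= ?odd_double //; lia.
Qed.

Section Mkseq.

Variable T : Type.

Lemma mkseqD (f : nat -> T) a b :
  mkseq f (a + b) = mkseq f a ++ mkseq (fun t => f (a + t)) b.
Proof.
rewrite /mkseq iotaD map_cat add0n; congr (_ ++ _).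
by rewrite -[X in iota X]addn0 iotaDl -map_comp.
Qed.

Lemma rot_mkseq (c : nat -> T) N i : (forall x, c (x + N) = c x) -> i < N ->
  rot i (mkseq c N) = mkseq (fun t => c (i + t)) N.
Proof.
move=> per iN; have hN : N = i + (N - i) by rewrite subnKC // ltnW.
rewrite [in LHS]hN mkseqD.
have {1}-> : i = size (mkseq c i) by rewrite size_mkseq.
rewrite rot_size_cat [in RHS]hN (addnC i) mkseqD.
congr (_ ++ _); apply: eq_mkseq => t /=.
by rewrite (_ : i + (N - i + t) = t + N) ?per //; lia.
Qed.

Lemma cat_mkseq (g : nat -> T) n X W Y : X ++ W ++ Y = mkseq g n ->
  W = mkseq (fun t => g (size X + t)) (size W).
Proof.
move=> E; apply: (@eq_from_nth _ (g 0)); first by rewrite size_mkseq.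
have hn : size X + size W + size Y = n by rewrite -(size_mkseq g n) -E !size_cat addnA.
move=> t ht; rewrite nth_mkseq //.
have := congr1 (fun s => nth (g 0) s (size X + t)) E.
by rewrite nth_cat ltnNge leq_addr /= addKn nth_cat ht nth_mkseq //; lia.
Qed.

End Mkseq.

Lemma prefix_mkseq (T : eqType) (g : nat -> T) N S :
  prefix S (mkseq g N) = (size S <= N) && (S == mkseq g (size S)).
Proof.
rewrite prefixE /mkseq -map_take take_iota.
case: (leqP (size S) N) => [_ | Ns]; first by rewrite eq_sym.
apply/negbTE/eqP => E.
by move: Ns; rewrite -E size_map size_iota ltnn.
Qed.

(* The average of [W] is within [1 / size W] of [p / q]. *)
Definition balanced (p q : nat) (W : seq nat) :=
  sumn W * q < size W * p + q /\ size W * p < sumn W * q + q.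

Section Windows.

Variables p q : nat.
Hypothesis q_gt0 : 0 < q.

Lemma cwin_sum j l : sumn (cwin p q j l) = ceilq p q (j + l) - ceilq p q j.
Proof.
elim: l => [|l IH]; first by rewrite addn0 subnn.
rewrite /cwin mkseqS sumn_rcons -/(cwin p q j l) IH /cgap addnS.
have := ceilq_mono p q (leq_addr l j); have := ceilq_mono p q (leqnSn (j + l)); lia.
Qed.

Lemma cwin_balanced j l : balanced p q (cwin p q j l).
Proof.
rewrite /balanced size_mkseq cwin_sum mulnBl.
have := ceilq_ge p q_gt0 (j + l); have := ceilq_le p q (j + l).
have := ceilq_ge p q_gt0 j; have := ceilq_le p q j.
have : ceilq p q j * q <= ceilq p q (j + l) * q by rewrite leq_mul2r ceilq_mono ?leq_addr ?orbT.
rewrite mulnDl; lia.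
Qed.

Lemma cwinDm j k l : cwin p q (j + k * q) l = cwin p q j l.
Proof. by rewrite /cwin; apply: eq_mkseq => t /=; rewrite addnAC cgapDm. Qed.

Lemma cwin_mod j l : cwin p q j l = cwin p q (j %% q) l.
Proof. by rewrite {1}(divn_eq j q) addnC cwinDm. Qed.

Lemma cat_cwin j n X W Y : X ++ W ++ Y = cwin p q j n ->
  W = cwin p q (j + size X) (size W).
Proof. by move/cat_mkseq => ->; rewrite size_mkseq; apply: eq_mkseq => t; rewrite addnA. Qed.

Lemma rot_cgaps z : z < 2 * q -> rot z (mkseq (cgap p q) (2 * q)) = cwin p q z (2 * q).
Proof. by move=> zq; rewrite rot_mkseq // => x; rewrite cgapDm. Qed.

Lemma cyc_contains_cgaps S :
  cyc_contains S (mkseq (cgap p q) (2 * q)) =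
  has (fun z => (size S <= 2 * q) && (S == cwin p q z (size S))) (iota 0 (2 * q)).
Proof.
rewrite /cyc_contains size_mkseq; apply: eq_in_has => z.
by rewrite mem_iota => /andP[_ zq]; rewrite rot_cgaps // prefix_mkseq.
Qed.

End Windows.

(* Each occurrence at [j] comes with one at [j + q]: two occurrences pin [j] mod [q]. *)
Lemma cwin_start_mod p q S j0 j : 0 < q ->
  cyc_count S (mkseq (cgap p q) (2 * q)) = 2 -> size S <= 2 * q ->
  S = cwin p q j0 (size S) -> cwin p q j (size S) = S -> j %% q = j0 %% q.
Proof.
move=> q0 cnt sS HS Hj; apply/eqP; apply: contraT => ne.
have at_start z : z < 2 * q -> cwin p q z (size S) = S ->
    prefix S (rot z (mkseq (cgap p q) (2 * q))).
  by move=> zq Hz; rewrite rot_cgaps // prefix_mkseq sS; apply/eqP; rewrite -{1}Hz.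
have xq : j0 %% q < q by rewrite ltn_mod.
have yq : j %% q < q by rewrite ltn_mod.
have win_x : cwin p q (j0 %% q) (size S) = S by rewrite -cwin_mod // {2}HS.
have win_xq : cwin p q (j0 %% q + 1 * q) (size S) = S by rewrite cwinDm.
have win_y : cwin p q (j %% q) (size S) = S by rewrite -cwin_mod.
suff : 3 <= cyc_count S (mkseq (cgap p q) (2 * q)) by rewrite cnt.
rewrite /cyc_count size_mkseq -size_filter.
apply: (@uniq_leq_size _ [:: j0 %% q; j0 %% q + 1 * q; j %% q]).
  rewrite /= !inE !negb_or (eq_sym (j0 %% q) (j %% q)) ne andbT.
  by apply/and3P; split => //; apply/eqP; lia.
move=> z; rewrite !inE mem_filter mem_iota add0n => /or3P[] /eqP ->;
  rewrite at_start //; lia.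
Qed.

Lemma rot_cgaps_mod p q i : 0 < q ->
  exists2 z, z < q & rot i (mkseq (cgap p q) (2 * q)) = cwin p q z (2 * q).
Proof.
move=> q0; exists (if i < 2 * q then i %% q else 0); first by case: ifP; rewrite ?ltn_mod.
case: ltnP => [iq|qi]; first by rewrite rot_cgaps // -cwin_mod.
by rewrite rot_oversize ?size_mkseq.
Qed.

Lemma cgaps_double_decomp p q i S1 S2 : 0 < q ->
  rot i (mkseq (cgap p q) (2 * q)) = S1 ++ S2 ++ S1 ++ S2 ->
  exists2 z, z < q & [/\ size S1 + size S2 = q,
    S1 = cwin p q z (size S1) & S2 = cwin p q (z + size S1) (size S2)].
Proof.
move=> q0; have [z zq ->] := rot_cgaps_mod p i q0 => E; exists z => //; split.
- by have := congr1 size E; rewrite size_mkseq !size_cat; lia.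
- by have := @cat_cwin p q z (2 * q) [::] S1 (S2 ++ S1 ++ S2) (esym E); rewrite addn0.
- exact: cat_cwin (esym E).
Qed.

Lemma head_cwin p q j l : 0 < l -> head 0 (cwin p q j l) = cgap p q j.
Proof. by case: l => // l _; rewrite /cwin /mkseq /= addn0. Qed.

Lemma ceilq_nodiv P Q J : 0 < Q -> ~~ (Q %| J * P) -> ceilq P Q J = (J * P %/ Q).+1.
Proof.
move=> Q0 nd; rewrite /ceilq {1}(divn_eq (J * P) Q).
have r0 : 0 < J * P %% Q by rewrite lt0n; apply: contra nd => /eqP r0; rewrite /dvdn r0.
have rQ : J * P %% Q < Q by rewrite ltn_mod.
move: (J * P %/ Q) (J * P %% Q) r0 rQ => a r r0 rQ.
rewrite (_ : a * Q + r + Q.-1 = a.+1 * Q + r.-1); last by rewrite mulSn; lia.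
by rewrite divnMDl // divn_small ?addn0 //; lia.
Qed.

Lemma ceilq_mirror P Q n J : 0 < Q -> J <= n * Q ->
  ceilq P Q (n * Q - J) = n * P - J * P %/ Q.
Proof.
move=> Q0 JnQ; rewrite /ceilq mulnBl.
have : J * P <= n * Q * P by rewrite leq_mul2r JnQ orbT.
rewrite mulnAC {1 2}(divn_eq (J * P) Q).
have rQ : J * P %% Q < Q by rewrite ltn_mod.
move: (J * P %/ Q) (J * P %% Q) rQ => a r rQ le.
rewrite (_ : n * P * Q - (a * Q + r) + Q.-1 = (n * P - a) * Q + (Q.-1 - r)).
  by rewrite divnMDl // divn_small ?addn0 //; lia.
by rewrite mulnBl; nia.
Qed.

Section InverseShift.

(* [t1] is the inverse of [P] modulo [Q]: [(J + t1) P / Q = J P / Q + k + 1/Q], so the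
   ceiling of a non-integer [J P / Q] moves by exactly [k + 1]. *)
Variables P Q t1 k : nat.
Hypotheses (Q_gt0 : 0 < Q) (inv_t1 : t1 * P = k * Q + 1).

Lemma ceilq_shift J : ceilq P Q (J + t1) = k.+1 + J * P %/ Q.
Proof.
rewrite /ceilq mulnDl inv_t1.
by rewrite (_ : _ + Q.-1 = k.+1 * Q + J * P) ?divnMDl // mulSn; lia.
Qed.

Lemma cgap_shift j : coprime Q P -> ~~ (Q %| j) -> ~~ (Q %| j.+1) ->
  cgap P Q (j + t1) = cgap P Q j.
Proof.
move=> cop nj nj1; have nd J : ~~ (Q %| J) -> ~~ (Q %| J * P) by rewrite Gauss_dvdl.
rewrite /cgap -addSn !ceilq_shift !ceilq_nodiv ?nd //.
have := leq_div2r Q (leq_mul (leqnSn j) (leqnn P)); lia.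
Qed.

Lemma cgap_mirror n j : j < n * Q -> cgap P Q (n * Q - j.+1) = cgap P Q (j + t1).
Proof.
move=> jn; rewrite /cgap -addSn !ceilq_shift.
rewrite (_ : (n * Q - j.+1).+1 = n * Q - j); last by lia.
rewrite !ceilq_mirror //; try lia.
have := leq_div2r Q (leq_mul (leqnSn j) (leqnn P)).
have := leq_div2r Q (leq_mul jn (leqnn P)); rewrite mulnAC mulnK //; lia.
Qed.

Lemma cwin_shift j l : coprime Q P -> (forall w, w <= l -> ~~ (Q %| j + w)) ->
  cwin P Q (j + t1) l = cwin P Q j l.
Proof.
move=> cop nd; apply/eq_in_map => t; rewrite mem_iota add0n => /andP[_ tl] /=.
by rewrite addnAC cgap_shift // -?addnS nd //; lia.
Qed.

Lemma rev_cwin n j l : j + l <= n * Q -> rev (cwin P Q j l) = cwin P Q (n * Q - j - l + t1) l.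
Proof.
move=> jl; apply: (@eq_from_nth _ 0) => [|t]; rewrite ?size_rev ?size_mkseq // => tl.
rewrite nth_rev ?size_mkseq // !nth_mkseq; try lia.
by rewrite addnAC -(@cgap_mirror n); [congr cgap|]; lia.
Qed.

End InverseShift.

(** * The decomposition [CS(r) = ((S1, S2, S1, S2))] *)

Lemma modinv_exists P Q : 1 < Q -> coprime Q P ->
  exists t1 k, t1 * P = k * Q + 1 /\ 0 < t1 < Q.
Proof.
move=> Q1 cop; have Q0 : 0 < Q by lia.
have [t0 t0Q /dvdnP[k0 Ek0]] := Bezoutl P Q0; rewrite (eqP cop) in Ek0.
have t0_gt0 : 0 < t0.
  by case: t0 Ek0 {t0Q} => // /esym/eqP; rewrite mul0n addn0 muln_eq1 => /andP[_ /eqP]; lia.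
exists (Q - t0), (P - k0); split; last by lia.
have : k0 <= P by nia.
by rewrite !mulnBl (mulnC Q P); nia.
Qed.

Lemma modn_addr_neq x t Q : x < Q -> 0 < t < Q -> (x + t) %% Q != x.
Proof.
move=> xQ /andP[t0 tQ]; case: (ltnP (x + t) Q) => h; first by rewrite modn_small //; lia.
by rewrite -(subnK h) modnDr modn_small; lia.
Qed.

Section Decomposition.

Variables P Q t1 k : nat.
Hypotheses (Q_gt0 : 0 < Q) (cop : coprime Q P).
Hypotheses (inv_t1 : t1 * P = k * Q + 1) (t1_bounds : 0 < t1 < Q).

(* A window occurring only at offset [j] modulo [Q] must contain a multiple of [Q]
   in its interior unless [j = 0]: otherwise the shift by [t1] reproduces it. *)
Lemma unique_cwin_crosses j l : j < Q ->
  (forall j', cwin P Q j' l = cwin P Q j l -> j' %% Q = j) -> j = 0 \/ Q <= j + l.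
Proof.
move=> jQ uniq_j; case: (posnP j) => [|j0]; [by left | right].
rewrite leqNgt; apply/negP => jl.
have /uniq_j/eqP : cwin P Q (j + t1) l = cwin P Q j l.
  apply: (cwin_shift Q_gt0 inv_t1 cop) => w wl; apply/negP => /(dvdn_leq (ltn_addr _ j0)); lia.
by rewrite (negbTE (modn_addr_neq jQ t1_bounds)).
Qed.

Let T := mkseq (cgap P Q) (2 * Q).

Lemma double_decomp_offset0 z S1 S2 m :
  z < Q -> size S1 + size S2 = Q -> S1 != [::] -> S2 != [::] ->
  S1 = cwin P Q z (size S1) -> S2 = cwin P Q (z + size S1) (size S2) ->
  cyc_count S1 T = 2 -> cyc_count S2 T = 2 ->
  head 0 S1 = m.+1 -> head 0 S2 = m -> z = 0.
Proof.
move=> zQ ab ne1 ne2 HS1 HS2 c1 c2 h1 h2.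
have a0 : 0 < size S1 by rewrite lt0n size_eq0.
have b0 : 0 < size S2 by rewrite lt0n size_eq0.
have sS1 : size S1 <= 2 * Q by lia.
have sS2 : size S2 <= 2 * Q by lia.
set z2 := (z + size S1) %% Q.
have z2Q : z2 < Q by rewrite ltn_mod.
have z2_neq0 : z2 != 0.
  apply: contraTneq (cgap_le0 P Q_gt0 z) => z20.
  move: h1 h2; rewrite HS1 HS2 !head_cwin // [cgap _ _ (z + _)]cgap_mod // -/z2 z20; lia.
have [//|crosses1] : z = 0 \/ Q <= z + size S1.
  apply: unique_cwin_crosses => // j; rewrite -HS1 => /(cwin_start_mod Q_gt0 c1 sS1 HS1) ->;
  rewrite ?modn_small //; lia.
have [z20|crosses2] : z2 = 0 \/ Q <= z2 + size S2.
  apply: unique_cwin_crosses => // j; rewrite -cwin_mod // -HS2.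
  by move/(cwin_start_mod Q_gt0 c2 sS2 HS2) ->.
  by rewrite z20 in z2_neq0.
move: crosses2; rewrite /z2 -(subnK crosses1) modnDr modn_small; lia.
Qed.

Lemma palindromic_cwin0 a : 0 < a < Q -> cyc_count (cwin P Q 0 a) T = 2 ->
  rev (cwin P Q 0 a) = cwin P Q 0 a -> a = t1.
Proof.
move=> a_bounds cnt pal.
have : (Q - a + t1 + 1 * Q) %% Q = 0 %% Q.
  have sz : size (cwin P Q 0 a) = a by rewrite size_mkseq.
  apply: (cwin_start_mod Q_gt0 cnt); rewrite ?sz //; first lia.
  by rewrite -[RHS]pal (@rev_cwin _ _ _ _ Q_gt0 inv_t1 2); [congr cwin|]; lia.
rewrite mul1n modnDr mod0n; case: (ltnP (Q - a + t1) Q) => h; first by rewrite modn_small; lia.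
by rewrite -(subnK h) modnDr modn_small; lia.
Qed.

End Decomposition.

Lemma CS_decomp_cwin r m S1 S2 P Q : 1 < Q -> coprime Q P ->
  CS r = mkseq (cgap P Q) (2 * Q) -> CS_decomp r m S1 S2 ->
  exists t1 k, [/\ t1 * P = k * Q + 1, 0 < t1 < Q,
                   S1 = cwin P Q 0 t1 & S2 = cwin P Q t1 (Q - t1)].
Proof.
move=> Q1 cop CSr [[i Hrot] [pal _] [c1 c2] [ne1 [h1 _]] [ne2 [h2 _]]].
rewrite CSr in Hrot c1 c2; have Q0 : 0 < Q by lia.
have [t1 [k [inv_t1 t1_bounds]]] := modinv_exists Q1 cop.
have [z zQ [ab HS1 HS2]] := cgaps_double_decomp Q0 Hrot.
have z0 := double_decomp_offset0 Q0 cop inv_t1 t1_bounds zQ ab ne1 ne2 HS1 HS2 c1 c2 h1 h2.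
rewrite {}z0 add0n in HS1 HS2.
have a_t1 : size S1 = t1.
  have a0 : 0 < size S1 by rewrite lt0n size_eq0.
  have b0 : 0 < size S2 by rewrite lt0n size_eq0.
  by apply: (palindromic_cwin0 Q0 cop inv_t1 t1_bounds); [lia | rewrite -HS1 | rewrite -HS1 -pal].
by exists t1, k; rewrite {1}HS1 {1}HS2 a_t1 (_ : size S2 = Q - t1); last lia.
Qed.

Lemma cgaps_block_balanced p q S X W Y : 0 < q ->
  cyc_contains S (mkseq (cgap p q) (2 * q)) -> S = X ++ W ++ Y -> balanced p q W.
Proof.
move=> q0; rewrite cyc_contains_cgaps // => /hasP[z _ /andP[_ /eqP ->]] /esym/cat_cwin ->.
exact: cwin_balanced.
Qed.

Lemma size_rep_pattern d A B C :
  size (rep_pattern d A B C) = d * (size A + size B) + size C.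
Proof. by rewrite size_cat size_flatten /shape map_nseq sumn_nseq size_cat mulnC. Qed.

Lemma sumn_rep_pattern d A B C :
  sumn (rep_pattern d A B C) = d * (sumn A + sumn B) + sumn C.
Proof. by rewrite sumn_cat sumn_flatten map_nseq sumn_nseq sumn_cat mulnC. Qed.

Lemma rep_pattern_balanced p q d A B : 0 < q ->
  cyc_contains (rep_pattern d.+2 A B A) (mkseq (cgap p q) (2 * q)) ->
  balanced p q (rep_pattern d.+2 A B A) /\ balanced p q (B ++ A ++ B).
Proof.
move=> q0 hc; split.
  by apply: (cgaps_block_balanced (X := [::]) (Y := [::]) q0 hc); rewrite cats0.
apply: (cgaps_block_balanced (X := A) (Y := flatten (nseq d (A ++ B)) ++ A) q0 hc).
by rewrite /rep_pattern /= -!catA.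
Qed.

Lemma inverse_unique P Q a c t1 k : coprime Q P -> 0 < a < Q -> 0 < t1 < Q ->
  P * a = Q * c + 1 -> t1 * P = k * Q + 1 -> a = t1 /\ c = k.
Proof.
move=> cop a_bounds t1_bounds inv_a inv_t1.
have a_t1 : a = t1.
  wlog le : a c t1 k a_bounds t1_bounds inv_a inv_t1 / t1 <= a.
    move=> W; case: (leqP t1 a) => h; first exact: (W a c t1 k).
    by apply/esym; apply: (W t1 k a c) => //; lia.
  have : Q %| (a - t1) * P.
    by apply/dvdnP; exists (c - k); rewrite !mulnBl (mulnC a) inv_a inv_t1 (mulnC Q); lia.
  rewrite Gauss_dvdl //; case: (posnP (a - t1)) => [|pos]; first lia.
  by move/(dvdn_leq pos); lia.
split => //; apply/eqP; rewrite -(@eqn_pmul2l Q) ?(leq_ltn_trans _ (proj2 (andP a_bounds))) //.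
by move: inv_a; rewrite a_t1 mulnC inv_t1 mulnC; lia.
Qed.

Lemma inverse_opp_unique P Q a c t1 k : 0 < Q -> coprime Q P -> 0 < a < Q -> 0 < t1 < Q ->
  Q * c = P * a + 1 -> t1 * P = k * Q + 1 -> a = Q - t1 /\ c = P - k.
Proof.
move=> Q_gt0 cop a_bounds t1_bounds inv_a inv_t1.
have e : (c + k) * Q = (a + t1) * P by rewrite !mulnDl (mulnC c) inv_a inv_t1 mulnC; lia.
have /dvdnP[x ex] : Q %| a + t1 by rewrite -(Gauss_dvdl _ cop) -e dvdn_mull.
have x1 : x = 1 by case: x ex => [|[|x]] ex; nia.
rewrite x1 mul1n in ex; split; first lia.
apply/eqP; rewrite -(eqn_pmul2l Q_gt0) mulnBr; apply/eqP.
by move: e; rewrite ex; nia.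
Qed.

Lemma even_gap_arith d P Q t1 k p q : t1 < Q -> k < P ->
  (d.+2 * P + k.+1) * q < (d.+2 * Q + t1) * p + q ->
  (Q - t1 + Q) * p < (P - k.+1 + P) * q + q ->
  (2 * Q - t1) * p < (2 * P - k) * q /\ (d.+2 * P + k) * q <= (d.+2 * Q + t1) * p.
Proof.
move=> tQ kP; rewrite -(subnKC (ltnW tQ)) -(subnKC kP).
by move: (Q - t1) (P - k.+1) => a c W V; split; lia.
Qed.

Lemma odd_gap_arith d P Q t1 k p q : t1 < Q -> k < P ->
  (d.+2 * Q + (Q - t1)) * p < (d.+2 * P + (P - k.+1)) * q + q ->
  (k.+1 + P) * q < (t1 + Q) * p + q ->
  (P + k) * q < (Q + t1) * p /\ (d.+2 * Q + (Q - t1)) * p < (d.+2 * P + (P - k)) * q.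
Proof.
move=> tQ kP; rewrite -(subnKC (ltnW tQ)) -(subnKC kP).
by move: (Q - t1) (P - k.+1) => a c W V; split; lia.
Qed.

Section InverseWindows.

Variables P Q t1 k : nat.
Hypothesis Q_gt0 : 0 < Q.
Hypotheses (inv_t1 : t1 * P = k * Q + 1) (t1_bounds : 0 < t1 < Q).

Lemma inverse_windows_sums :
  [/\ sumn (cwin P Q 0 t1) = k.+1, sumn (cwin P Q t1 (Q - t1)) = P - k.+1 & k < P].
Proof.
have ct1 : ceilq P Q (0 + t1) = k.+1 by rewrite (ceilq_shift Q_gt0 inv_t1) mul0n div0n addn0.
have cQ : ceilq P Q (0 + 1 * Q) = P by rewrite ceilqDm // ceilq0 // mul1n.
rewrite add0n in ct1; rewrite add0n mul1n in cQ.
have le : k < P by rewrite -cQ -ct1; apply: ceilq_mono; lia.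
have t1Q : t1 <= Q by lia.
by rewrite !cwin_sum // add0n ceilq0 // ct1 subn0 (subnKC t1Q) cQ.
Qed.

Let S1 := cwin P Q 0 t1.
Let S2 := cwin P Q t1 (Q - t1).

Lemma even_pattern_gap d p q : 0 < q ->
  cyc_contains (rep_pattern d.+2 S1 S2 S1) (mkseq (cgap p q) (2 * q)) ->
  (2 * Q - t1) * p < (2 * P - k) * q /\ (d.+2 * P + k) * q <= (d.+2 * Q + t1) * p.
Proof.
move=> q0 /(rep_pattern_balanced q0) [[W _] [_ V]].
have [s1 s2 kP] := inverse_windows_sums.
have t1Q : t1 < Q by case/andP: t1_bounds.
move: W V; rewrite /S1 /S2 size_rep_pattern sumn_rep_pattern !size_cat !sumn_cat !size_mkseq s1 s2.
rewrite (subnKC (ltnW t1Q)) (subnKC kP).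
exact: even_gap_arith.
Qed.

Lemma odd_pattern_gap d p q : 0 < q ->
  cyc_contains (rep_pattern d.+2 S2 S1 S2) (mkseq (cgap p q) (2 * q)) ->
  (P + k) * q < (Q + t1) * p /\ (d.+2 * Q + (Q - t1)) * p < (d.+2 * P + (P - k)) * q.
Proof.
move=> q0 /(rep_pattern_balanced q0) [[_ W] [V _]].
have [s1 s2 kP] := inverse_windows_sums.
have t1Q : t1 < Q by case/andP: t1_bounds.
move: W V; rewrite /S1 /S2 size_rep_pattern sumn_rep_pattern !size_cat !sumn_cat !size_mkseq s1 s2.
rewrite (subnK (ltnW t1Q)) (subnK kP).
exact: odd_gap_arith.
Qed.

End InverseWindows.

(** * Continued fractions and the endpoints of [I1], [I2] *)

Local Open Scope ring_scope.

Fixpoint cf_tail (l : seq nat) (z : rat) : rat :=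
  if l is x :: t then (x%:R + cf_tail t z)^-1 else z.

Lemma cf_cat l t : cf (l ++ t) = cf_tail l (cf t).
Proof. by elim: l => //= x l ->. Qed.

Lemma cf_ge0 l : 0 <= cf l.
Proof. by elim: l => //= x l IH; rewrite invr_ge0 addr_ge0 ?ler0n. Qed.

Lemma cf_le1 l : (0 < head 0 l)%N -> cf l <= 1.
Proof.
case: l => //= x l x0; have := cf_ge0 l.
have : (1 : rat) <= x%:R by rewrite ler1n.
by move=> ? ?; rewrite invf_le1; lra.
Qed.

Lemma cf_pair x y : (0 < y)%N -> cf [:: x; y] = y%:R / (x * y + 1)%N%:R.
Proof.
move=> y0 /=; rewrite addr0 natrD natrM.
have hy : y%:R != 0 :> rat by rewrite pnatr_eq0 -lt0n.
have hxy : x%:R * y%:R + 1 != 0 :> rat by rewrite -natrM natr1 pnatr_eq0.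
by field; rewrite hy hxy.
Qed.

(* [a / c = cf l] and [b / d] are the last two convergents of [l]. *)
Lemma cf_tail_mobius l : all (fun x => 0 < x)%N l -> exists a b c d : nat,
  [/\ (0 < c)%N, (if odd (size l) then a * d = b * c + 1 else a * d + 1 = b * c)%N,
      (l != [::] -> 0 < a)%N &
      forall z : rat, 0 <= z -> cf_tail l z = (a%:R + b%:R * z) / (c%:R + d%:R * z)].
Proof.
elim: l => [|x l IH] /=.
  by exists 0%N, 1%N, 1%N, 0%N; split => // z _; rewrite add0r mul1r mul0r addr0 divr1.
case/andP => x0 /IH [a [b [c [d [c0 det _ Fz]]]]].
exists c, d, (x * c + a)%N, (x * d + b)%N; split => //.
- by rewrite addn_gt0 muln_gt0 x0 c0.
- by case: (odd (size l)) det => /= det; nia.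
move=> z z0; rewrite Fz //.
have hc : 0 < c%:R + d%:R * z :> rat by rewrite ltr_pwDl ?ltr0n ?mulr_ge0 ?ler0n.
have hx : 0 < (x * c + a)%N%:R + (x * d + b)%N%:R * z :> rat.
  by rewrite ltr_pwDl ?ltr0n ?addn_gt0 ?muln_gt0 ?x0 ?c0 ?mulr_ge0 ?ler0n.
rewrite !natrD !natrM in hx *; field.
by rewrite !lt0r_neq0.
Qed.

Lemma mobius_frac (a b c d u v : nat) : (0 < v)%N -> (0 < c)%N ->
  (a%:R + b%:R * (u%:R / v%:R)) / (c%:R + d%:R * (u%:R / v%:R)) =
  (a * v + b * u)%N%:R / (c * v + d * u)%N%:R :> rat.
Proof.
move=> v0 c0.
have hv : v%:R != 0 :> rat by rewrite pnatr_eq0 -lt0n.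
have hcv : (c * v + d * u)%N%:R != 0 :> rat.
  by rewrite pnatr_eq0 -lt0n addn_gt0 muln_gt0 c0 v0.
rewrite !natrD !natrM in hcv *.
have -> : c%:R + d%:R * (u%:R / v%:R) = (c%:R * v%:R + d%:R * u%:R) / v%:R :> rat.
  by field.
by field; rewrite hv hcv.
Qed.

Lemma cf_convergents ms : (2 <= size ms)%N -> all (fun x => 0 < x)%N ms ->
  (2 <= last 0 ms)%N -> exists Q P a c : nat,
  [/\ (0 < a < Q)%N,
      (if ~~ odd (size ms) then P * a = Q * c + 1 else Q * c = P * a + 1)%N,
      cf ms = Q%:R / P%:R,
      cf_endA ms = (2 * Q - a)%N%:R / (2 * P - c)%N%:R &
      forall d : nat, cf (ms ++ [:: d.+1]) = (d.+1 * Q + a)%N%:R / (d.+1 * P + c)%N%:R].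
Proof.
case/lastP: ms => [//|init mk].
rewrite size_rcons all_rcons last_rcons ltnS => hsz /andP[_ pos] mk2.
have init0 : init != [::] by case: init hsz {pos}.
have [a [b [c [d [c0 det /(_ init0) a0 Fz]]]]] := cf_tail_mobius pos.
exists (a * mk + b)%N, (c * mk + d)%N, a, c; split.
- by apply/andP; split => //; nia.
- by rewrite /= negbK; case: (odd (size init)) det => det; nia.
- have cf_mk : cf [:: mk] = 1%N%:R / mk%:R by rewrite /= addr0 div1r.
  by rewrite -cats1 cf_cat Fz ?cf_ge0 // cf_mk mobius_frac ?muln1 //; lia.
- rewrite /cf_endA size_rcons last_rcons -cats1 take_size_cat //.
  rewrite cf_cat Fz ?cf_ge0 // cf_pair // mobius_frac ?addn1 //.
  by congr (_%:R / _%:R); case: mk mk2 {det} => // mk _; rewrite /=; lia.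
- move=> e; rewrite -cats1 -catA cf_cat Fz ?cf_ge0 // cf_pair // mobius_frac ?addn1 //.
  by congr (_%:R / _%:R); lia.
Qed.

Lemma inI_unit ms n s : (2 <= size ms)%N -> all (fun x => 0 < x)%N ms ->
  inI1 ms n s || inI2 ms n s -> 0 <= s <= 1.
Proof.
case: ms => // x l hsz /andP[x0 _].
have A01 : 0 <= cf_endA (x :: l) <= 1.
  rewrite cf_ge0 cf_le1 // /cf_endA /=.
  by case: l hsz => // y l _; rewrite /= take_cons.
have B01 : 0 <= cf_endB (x :: l) n <= 1 by rewrite cf_ge0 cf_le1.
rewrite /inI1 /inI2; move: A01 B01 => /andP[? ?] /andP[? ?].
by case: ifP => _ /orP[] /andP[? ?]; apply/andP; split; lra.
Qed.

Lemma coprime_of_lin x y u v : (x * u = y * v + 1)%N -> coprime x y.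
Proof.
move=> e; have g_yv : (gcdn x y %| y * v)%N by rewrite dvdn_mulr // dvdn_gcdr.
have : (gcdn x y %| y * v + 1)%N by rewrite -e dvdn_mulr // dvdn_gcdl.
by rewrite (dvdn_addr _ g_yv) dvdn1.
Qed.

Lemma num_den_frac (q p : nat) : coprime q p -> (0 < p)%N ->
  numq (q%:R / p%:R : rat) = q /\ denq (q%:R / p%:R : rat) = p.
Proof.
move=> cop p0; have p0' : (0 < Posz p)%R by rewrite ltz_nat.
split; first by rewrite (coprimeq_num (n := q) (d := p)) // gtr0_sg // mul1r.
by rewrite (coprimeq_den (n := q) (d := p)) // eqz_nat (negbTE (lt0n_neq0 p0)).
Qed.

Lemma rat_unit_frac (s : rat) : 0 < s <= 1 -> exists q p : nat,
  [/\ numq s = q, denq s = p, (0 < q <= p)%N & s = q%:R / p%:R].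
Proof.
case/andP => s0 s1; exists `|numq s|%N, `|denq s|%N.
have nq : numq s = `|numq s|%N by rewrite gez0_abs // ltW // numq_gt0.
have dp : denq s = `|denq s|%N by rewrite gez0_abs // ltW // denq_gt0.
have sE : s = `|numq s|%N%:R / `|denq s|%N%:R by rewrite -[s in LHS]divq_num_den nq dp.
have p0 : (0 < `|denq s|)%N by rewrite absz_gt0 denq_neq0.
split => //; apply/andP; split; first by rewrite absz_gt0 numq_eq0 gt_eqF.
by move: s1; rewrite {1}sE ler_pdivrMr ?ltr0n // mul1r ler_nat.
Qed.

Lemma ltr_frac_nat (x y u v : nat) : (0 < y)%N -> (0 < v)%N ->
  (x%:R / y%:R < u%:R / v%:R :> rat) = (x * v < u * y)%N.
Proof.
by move=> y0 v0; rewrite ltr_pdivrMr ?ltr0n // mulrAC ltr_pdivlMr ?ltr0n // -!natrM ltr_nat.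
Qed.

Lemma ler_frac_nat (x y u v : nat) : (0 < y)%N -> (0 < v)%N ->
  (x%:R / y%:R <= u%:R / v%:R :> rat) = (x * v <= u * y)%N.
Proof.
by move=> y0 v0; rewrite ler_pdivrMr ?ltr0n // mulrAC ler_pdivlMr ?ltr0n // -!natrM ler_nat.
Qed.

Lemma cyc_contains_size (S T : seq nat) : cyc_contains S T -> (size S <= size T)%N.
Proof. by case/hasP => i _ /size_prefix; rewrite size_rot. Qed.

Lemma size_rep_pattern_gt1 d A B : (0 < size A)%N -> (1 < size (rep_pattern d.+1 A B A))%N.
Proof. by rewrite size_rep_pattern mulSn; lia. Qed.

Lemma CS0 : CS 0 = [:: 2%N].
Proof. by vm_compute. Qed.

Lemma no_pattern_outside_gap (ev : bool) (Q P a c d m : nat) (S1 S2 : seq nat) (s : rat) :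
  (0 < a < Q)%N -> (if ev then P * a = Q * c + 1 else Q * c = P * a + 1)%N ->
  0 < (Q%:R / P%:R : rat) < 1 -> CS_decomp (Q%:R / P%:R) m S1 S2 -> 0 <= s <= 1 ->
  (if ev then (0 <= s) && (s <= (2 * Q - a)%N%:R / (2 * P - c)%N%:R)
   else (0 <= s) && (s < (d.+2 * Q + a)%N%:R / (d.+2 * P + c)%N%:R)) ||
  (if ev then ((d.+2 * Q + a)%N%:R / (d.+2 * P + c)%N%:R < s) && (s <= 1)
   else ((2 * Q - a)%N%:R / (2 * P - c)%N%:R <= s) && (s <= 1)) ->
  if ev then ~~ cyc_contains (rep_pattern d.+2 S1 S2 S1) (CS s)
  else ~~ cyc_contains (rep_pattern d.+2 S2 S1 S2) (CS s).
Proof.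
move=> a_bounds inv r01 hdec /andP[s_ge0 s_le1] hs.
have P0 : (0 < P)%N by case: P r01 {inv hdec hs} => //; rewrite invr0 mulr0 ltxx.
have QP : (Q < P)%N by case/andP: r01 => _; rewrite ltr_pdivrMr ?ltr0n // mul1r ltr_nat.
have Q1 : (1 < Q)%N by lia.
have cop : coprime Q P.
  case: ev inv {hs} => inv; last exact: coprime_of_lin inv.
  by rewrite coprime_sym; apply: coprime_of_lin inv.
have [numr denr] := num_den_frac cop P0.
have [t1 [k [inv_t1 t1_bounds HS1 HS2]]] :=
  CS_decomp_cwin Q1 cop (CS_num_den numr denr (ltnW Q1) (ltnW QP)) hdec.
have [_ _ _ [/negP ne1 _] [/negP ne2 _]] := hdec.
have [->|s_gt0] := eqVneq s 0.
  rewrite CS0; case: ev {inv hs}; apply/negP => /cyc_contains_size;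
  by rewrite leqNgt size_rep_pattern_gt1 // lt0n size_eq0; apply/negP.
have [q [p [nq dp /andP[q0 qp] sE]]] : exists q p : nat,
  [/\ numq s = q, denq s = p, (0 < q <= p)%N & s = q%:R / p%:R].
  by apply: rat_unit_frac; rewrite lt_def s_gt0 s_ge0 s_le1.
rewrite (CS_num_den nq dp q0 qp) HS1 HS2; rewrite {}sE in hs.
have Q0 : (0 < Q)%N by lia.
have p0 : (0 < p)%N by lia.
have [_ _ kP] := inverse_windows_sums Q0 inv_t1 t1_bounds.
case: ev inv hs => inv hs.
- have [at1 ck] := inverse_unique cop a_bounds t1_bounds inv inv_t1; subst a c.
  apply/negP => /(even_pattern_gap Q0 inv_t1 t1_bounds q0) [lo hi].
  case/orP: hs => [/andP[_] | /andP[+ _]]; rewrite ?ler_frac_nat ?ltr_frac_nat //; lia.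
- have [at1 ck] := inverse_opp_unique Q0 cop a_bounds t1_bounds inv inv_t1; subst a c.
  apply/negP => /(odd_pattern_gap Q0 inv_t1 t1_bounds q0) [lo hi].
  case/orP: hs => [/andP[_] | /andP[+ _]]; rewrite ?ler_frac_nat ?ltr_frac_nat //; lia.
Qed.

Theorem lemma2p1 (ms : seq nat) (n : nat) (S1 S2 : seq nat) :
  (2 <= size ms)%N ->
  all (fun x => 0 < x)%N ms ->
  (2 <= last 0 ms)%N ->
  0 < cf ms < 1 ->
  (forall p : nat, (2 <= p)%N -> cf ms != (p%:R)^-1) ->
  (2 <= n)%N ->
  CS_decomp (cf ms) (head 0%N ms) S1 S2 ->
  forall s : rat, inI1 ms n s || inI2 ms n s ->
    (if ~~ odd (size ms)
     then ~~ cyc_contains (rep_pattern (2 * n - 2) S1 S2 S1) (CS s)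
     else ~~ cyc_contains (rep_pattern (2 * n - 2) S2 S1 S2) (CS s)).
Proof.
(* The hypothesis [r <> 1/p] is implied by [k >= 2] and [m_k >= 2]. *)
move=> hsz hpos hlast r01 _ hn hdec s hs.
have s01 := inI_unit hsz hpos hs.
have [Q [P [a [c [a_bounds inv r_eq eA eB]]]]] := cf_convergents hsz hpos hlast.
have [d dE] : exists d, (2 * n - 2 = d.+2)%N by exists (2 * n - 4)%N; lia.
rewrite r_eq in r01 hdec; rewrite /inI1 /inI2 /cf_endB eA dE eB in hs; rewrite dE.
exact: no_pattern_outside_gap a_bounds inv r01 hdec s01 hs.
Qed.
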